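(* Let $\ell,\tilde\ell\in\mathcal{D}^-[0,\infty)$ and $r,\tilde r\in\mathcal{D}^+[0,\infty)$ with $\tilde\ell=\ell$, $r\le\tilde r$ and $\inf_{t\ge0}(r(t)-\ell(t))>0$. Given $\psi\in\mathcal{D}[0,\infty)$, let $(\eta_\ell,\eta_r)$ and $(\eta_{\tilde\ell},\eta_{\tilde r})$ be the constraining processes associated with the SP for $\psi$ on $[\ell(\cdot),r(\cdot)]$ and on $[\tilde\ell(\cdot),\tilde r(\cdot)]$, respectively. Then for every $t\ge0$, $\eta_r(t)\ge\eta_{\tilde r}(t)$ and $\eta_\ell(t)\ge\eta_{\tilde\ell}(t)$.
   Context: $\mathcal{D}[0,\infty)$ denotes the càdlàg functions $[0,\infty)\to(-\infty,\infty)$; $\mathcal{D}^-[0,\infty)$ (resp. $\mathcal{D}^+[0,\infty)$) denotes càdlàg functions with values in $[-\infty,\infty)$ (resp. $(-\infty,\infty]$). SP: $(\phi,\eta)\in\mathcal{D}[0,\infty)^2$ solves the SP on $[\ell(\cdot),r(\cdot)]$ for $\psi$ if (1) $\phi(t)=\psi(t)+\eta(t)\in[\ell(t),r(t)]$ for all $t\ge0$; (2) $\eta=\eta_\ell-\eta_r$ with $\eta_\ell,\eta_r$ non-decreasing and $\int_0^\infty \mathbb{I}_{\{\phi(s)>\ell(s)\}}\,d\eta_\ell(s)=0$, $\int_0^\infty \mathbb{I}_{\{\phi(s)<r(s)\}}\,d\eta_r(s)=0$. The pair $(\eta_\ell,\eta_r)$ is called the pair of constraining processes associated with the SP. When $\inf_t(r(t)-\ell(t))>0$,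 the SP has a unique solution for every $\psi\in\mathcal{D}[0,\infty)$. *)

From HB Require Import structures.
From mathcomp Require Import all_boot all_order all_algebra.
From mathcomp Require Import all_classical all_reals all_analysis.
Set Implicit Arguments. Unset Strict Implicit. Unset Printing Implicit Defensive.
Import Order.TTheory GRing.Theory Num.Theory.
Import numFieldNormedType.Exports.
Local Open Scope classical_set_scope.
Local Open Scope ring_scope.

Section Defs.
Variable R : realType.

(* Càdlàg on [0,oo): right-continuous at every t >= 0, left limit at every t > 0.
   Functions are given on all of R; only their values on [0,oo) matter. *)
Definition cadlag (f : R -> R) : Prop :=
  forall t : R, 0 <= t ->
    f @ at_right t --> f t /\ (0 < t -> cvg (f @ at_left t)).

Definition cadlag_ext (f : R -> \bar R) : Prop :=
  forall t : R, 0 <= t ->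
    f @ at_right t --> f t /\ (0 < t -> cvg (f @ at_left t)).

Definition Dminus (f : R -> \bar R) : Prop :=
  cadlag_ext f /\ forall t, 0 <= t -> f t != +oo%E.
Definition Dplus (f : R -> \bar R) : Prop :=
  cadlag_ext f /\ forall t, 0 <= t -> f t != -oo%E.

(* Extension of a function on [0,oo) by 0 on (-oo,0): convention eta(0-) = 0,
   so that the Stieltjes measure d eta on [0,oo) has an atom eta(0) at 0. *)
Definition ext0 (f : R -> R) : R -> R := fun s => if s < 0 then 0 else f s.

Definition LS (F : R -> R) (nd : nondecreasing F) (rc : right_continuous F) :=
  @lebesgue_stieltjes_measure R (HB.pack F (isCumulative.Build R _ R F nd rc)).

(* (phi, eta) solves the SP on [l(.), r(.)] for psi, with (etal, etar) the
   associated pair of constraining processes.  eta = phi - psi is determined by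
   phi and psi; the complementarity conditions are the Lebesgue-Stieltjes
   integrals over [0,oo) w.r.t. d etal and d etar (with etal(0-)=etar(0-)=0). *)
Definition SP (l r : R -> \bar R) (psi phi eta etal etar : R -> R) : Prop :=
  [/\ cadlag phi /\ cadlag eta,
      (forall t, 0 <= t -> phi t = psi t + eta t),
      (forall t, 0 <= t -> (l t <= (phi t)%:E <= r t)%E),
      (forall t, 0 <= t -> eta t = etal t - etar t) &
      (exists (ndl : nondecreasing (ext0 etal)) (rcl : right_continuous (ext0 etal))
             (ndr : nondecreasing (ext0 etar)) (rcr : right_continuous (ext0 etar)),
        (\int[LS ndl rcl]_(s in [set x : R | (0 <= x)%R]) (\1_[set s | (l s < (phi s)%:E)%E] s)%:E = 0)%E
        /\ (\int[LS ndr rcr]_(s in [set x : R | (0 <= x)%R]) (\1_[set s | ((phi s)%:E < r s)%E] s)%:E = 0)%E)].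

End Defs.

From HB Require Import structures.
From mathcomp Require Import all_boot all_order all_algebra.
From mathcomp Require Import all_classical all_reals all_analysis.
From mathcomp Require Import lra.
Import Order.TTheory GRing.Theory Num.Theory.
Import numFieldNormedType.Exports.
Local Open Scope classical_set_scope.
Local Open Scope ring_scope.

Set Implicit Arguments.
Unset Strict Implicit.
Unset Printing Implicit Defensive.

(* Put A := etar - etart and B := etal - etalt, so that phit - phi = A - B.
   Where phit is on the lower barrier, phit <= l <= phi gives A <= B; where it is
   on the upper barrier, phi <= r <= rt <= phit gives B <= A.  If A < 0 at a time
   where phit < rt, then, since etart only increases when phit = rt, going back
   to the last increase of etart gives an earlier time at which A < 0 and
   phit >= rt, hence B <= A < 0; symmetrically for B.  A failure of the claim
   thus produces times, alternately on the upper and on the lower barrier and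
   accumulating from the right at their infimum tau, at which A and B are
   negative.  But as l(tau) < rt(tau), right-continuity keeps phit strictly
   away from one of the two barriers just after tau. *)

Lemma integral_indic_eq0_measure0 d (T : measurableType d) (R : realType)
    (mu : {measure set T -> \bar R}) (D P S : set T) :
  measurable S -> S `<=` D -> S `<=` P ->
  (\int[mu]_(x in D) (\1_P x)%:E = 0)%E -> mu S = 0%E.
Proof.
move=> mS SsubD SsubP int0; apply/eqP; rewrite eq_le measure_ge0 andbT -int0.
rewrite ge0_integralE; last by move=> x _; rewrite lee_fin.
apply: ereal_sup_ubound; exists (indic_nnsfun R mS); last first.
  by rewrite sintegral_indic.
move=> x /=; rewrite /patch measurable_realfun.mindicE.
have [xS|xS] := boolP (x \in S); last first.
  by case: ifP => _; rewrite lee_fin // indicE; case: (_ \in _).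
move: xS; rewrite inE => /[dup] /SsubD Dx /SsubP Px.
have -> : x \in D by rewrite inE.
by rewrite indicE (_ : x \in P) ?inE.
Qed.

Section LebesgueStieltjes.
Variables (R : realType) (F : R -> R).
Variables (nd : nondecreasing F) (rc : right_continuous F).

Lemma LS_itvoc (a b : R) : a <= b -> LS nd rc `]a, b] = (F b - F a)%:E.
Proof.
move=> ab; rewrite /LS /lebesgue_stieltjes_measure /measure_extension /=.
rewrite (@measurable_mu_extE _ _ _ (wlength (HB.pack_for (cumulative R R) F
  (isCumulative.Build R _ R F nd rc)))) /=; last exact: is_ocitv.
by rewrite wlength_itv_bnd.
Qed.

Lemma LS_set1_eq0_approx_left (v : R) : LS nd rc [set v] = 0%E ->
  forall e, 0 < e -> exists2 w, w < v & F v - F w < e.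
Proof.
move=> atom0 e e0; apply: contrapT => noapprox.
have jump w : w < v -> e <= F v - F w.
  by move=> wv; rewrite leNgt; apply/negP => lt; apply: noapprox; exists w.
pose E n := `]v - n.+1%:R^-1, v]%classic.
have Ev n : v - n.+1%:R^-1 <= v by rewrite lerBlDr lerDl invr_ge0 ler0n.
have cvgE : (LS nd rc \o E) @ \oo --> LS nd rc [set v].
  rewrite set1_bigcap_oc; apply: nonincreasing_cvg_mu.
  - by have := LS_itvoc (Ev 0); rewrite /LS /E /= => ->; rewrite ltry.
  - by move=> n; exact: measurable_itv.
  - by apply: bigcapT_measurable => n; exact: measurable_itv.
  - move=> m n mn; apply/subsetPset/subset_itv => //.
    by rewrite leBSide /= lerD2l lerN2 lef_pV2 ?posrE ?ltr0n // ler_nat.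
have : (e%:E <= 0)%E.
  rewrite -atom0; apply: (cvge_to_ge cvgE); apply: nearW => n /=.
  rewrite /E LS_itvoc // lee_fin jump // ltrBlDr ltrDl invr_gt0 ltr0n //.
by rewrite lee_fin leNgt e0.
Qed.

End LebesgueStieltjes.

Section Ext0.
Variables (R : realType) (X : R -> R).

Lemma ext0_id (x : R) : 0 <= x -> ext0 X x = X x.
Proof. by rewrite /ext0 ltNge => ->. Qed.

Lemma ext0_neg (x : R) : x < 0 -> ext0 X x = 0.
Proof. by rewrite /ext0 => ->. Qed.

Hypothesis ndX : nondecreasing (ext0 X).

Lemma ext0_nd_le (a b : R) : 0 <= a -> a <= b -> X a <= X b.
Proof.
by move=> a0 ab; rewrite -(ext0_id a0) -(ext0_id (le_trans a0 ab)); exact: ndX.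
Qed.

Lemma ext0_nd_ge0 (a : R) : 0 <= a -> 0 <= X a.
Proof.
move=> a0; rewrite -(ext0_id a0) -(ext0_neg (ltrN10 R)); apply: ndX.
exact: le_trans (lerN10 R) a0.
Qed.

End Ext0.

Lemma ereal_lt_real_between (R : realType) (a b : \bar R) :
  (a < b)%E -> exists m : R, (a < m%:E < b)%E.
Proof.
case: a b => [a||] [b||] //= ab.
- by exists ((a + b) / 2); rewrite !lte_fin in ab *; apply/andP; split; lra.
- by exists (a + 1); rewrite lte_fin ltry andbT; lra.
- by exists (b - 1); rewrite lte_fin ltNyr /=; lra.
- by exists 0; rewrite ltNyr ltry.
Qed.

Lemma cvge_lt_near (T : Type) (F : set_system T) {FF : Filter F}
    (R : realType) (f g : T -> \bar R) (a b : \bar R) :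
  f @ F --> a -> g @ F --> b -> (a < b)%E -> \forall x \near F, (f x < g x)%E.
Proof.
move=> fa gb /ereal_lt_real_between[m /andP[am mb]].
near=> x; apply: (@lt_trans _ _ m%:E); near: x.
- exact: fa _ (open_ereal_lt' am).
- exact: gb _ (open_ereal_gt' mb).
Unshelve. all: by end_near. Qed.

Section Descent.
Variables (R : realType) (X Y : R -> R) (P : set R).
Variables (ndX : nondecreasing (ext0 X)) (rcX : right_continuous (ext0 X)).

Lemma level_set_left_end (u : R) : 0 <= u ->
  exists v, [/\ 0 <= v, v <= u, X v = X u & forall w, 0 <= w -> w < v -> X w < X v].
Proof.
move=> u0; pose S := [set w : R | 0 <= w <= u /\ X w = X u].
have Su : S u by split => //; rewrite u0 lexx.
have S0 : S !=set0 by exists u.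
have lbS : has_lbound S by exists 0 => w [/andP[]].
have v0 : 0 <= inf S by apply: lb_le_inf => // w [/andP[]].
have vu : inf S <= u by exact: ge_inf.
have XS w : inf S < w -> w <= u -> X w = X u.
  move=> vw wu; have [s [/andP[s0 su] Xs] sw] := inf_lt S0 vw.
  apply/eqP; rewrite eq_le (ext0_nd_le ndX (le_trans v0 (ltW vw)) wu) /=.
  by rewrite -Xs (ext0_nd_le ndX s0 (ltW sw)).
have Xv : X (inf S) = X u.
  have [vu_lt|uv] := ltP (inf S) u; last by rewrite (@le_anti _ _ (inf S) u) ?vu.
  have lim_right : ext0 X @ at_right (inf S) --> X u.
    apply: cvg_near_cst; near=> w; rewrite ext0_id; last first.
      by apply: le_trans v0 _; apply/ltW; near: w; exact: nbhs_right_gt.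
    apply: XS; first by near: w; exact: nbhs_right_gt.
    by apply/ltW; near: w; exact: nbhs_right_lt.
  by rewrite -(ext0_id X v0); exact: (cvg_unique _ (@rcX (inf S)) lim_right).
exists (inf S); split => // w w0 wv.
rewrite lt_neqAle (ext0_nd_le ndX w0 (ltW wv)) andbT Xv.
apply/eqP => Xw; suff : inf S <= w by rewrite leNgt wv.
by apply: ge_inf => //; split; rewrite ?w0 ?(le_trans (ltW wv) vu).
Unshelve. all: by end_near. Qed.

Hypothesis X_off_P :
  (\int[LS ndX rcX]_(s in [set x : R | (0 <= x)%R]) (\1_P s)%:E = 0)%E.

Lemma increase_off_support (a b : R) : 0 <= a -> a <= b -> X a < X b ->
  exists2 y, y \in `]a, b] & ~ P y.
Proof.
move=> a0 ab Xab; apply: contrapT => noy.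
have : LS ndX rcX `]a, b] = 0%E.
  apply: (integral_indic_eq0_measure0 _ _ _ X_off_P).
  - exact: measurable_itv.
  - by move=> x; rewrite /= in_itv /= => /andP[ax _]; apply: le_trans a0 (ltW ax).
  - by move=> x xin; apply: contrapT => nPx; apply: noy; exists x.
rewrite LS_itvoc // !ext0_id ?(le_trans a0 ab) // => /eqP.
by rewrite eqe subr_eq0 => /eqP Xba; move: Xab; rewrite Xba ltxx.
Qed.

Hypothesis ndY : nondecreasing (ext0 Y).

(* [X] increases only off [P]; going back to the last time [X] increased,
   [Y] (nondecreasing) can only get smaller, so [Y < X] persists there. *)
Lemma descent_off_support (u : R) : 0 <= u -> Y u < X u -> P u ->
  exists y, [/\ 0 <= y, y < u, Y y < X y & ~ P y].
Proof.
move=> u0 YXu Pu.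
have [v [v0 vu Xv Xlt]] := level_set_left_end u0.
have YXv : Y v < X v by rewrite Xv (le_lt_trans (ext0_nd_le ndY v0 vu)).
have [Pv|nPv] := pselect (P v); last first.
  by exists v; split => //; rewrite lt_neqAle vu andbT; apply: contra_notN nPv => /eqP->.
have atom0 : LS ndX rcX [set v] = 0%E.
  apply: (integral_indic_eq0_measure0 _ _ _ X_off_P).
  - exact: (measurable_set1 v).
  - by move=> x ->.
  - by move=> x ->.
have [w wv Xvw] : exists2 w, w < v & ext0 X v - ext0 X w < X v - Y v.
  by apply: LS_set1_eq0_approx_left atom0 _ _; rewrite subr_gt0.
have v_gt0 : 0 < v.
  (* at [v = 0] the atom of [d X] is [X 0], since [ext0 X] vanishes on (-oo, 0) *)
  rewrite lt_neqAle v0 andbT; apply/eqP => v0_eq.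
  have w_neg : w < 0 by rewrite v0_eq.
  move: Xvw; rewrite ext0_id // ext0_neg // => Xvw.
  have := ext0_nd_ge0 ndY v0; lra.
pose w' := Num.max w (v / 2).
have w'_gt0 : 0 < w' by rewrite lt_max divr_gt0 ?orbT.
have w'v : w' < v by rewrite gt_max wv /= ltr_pdivrMr // ltr_pMr // ltr1n.
have Xw'v : X w' < X v by apply: Xlt => //; exact: ltW.
have Yvw' : Y v < X w'.
  have Xww' : ext0 X w <= ext0 X w' by apply: ndX; rewrite le_max lexx.
  rewrite -(ext0_id X (ltW w'_gt0)); rewrite ext0_id // in Xvw; lra.
have [y yin nPy] := increase_off_support (ltW w'_gt0) (ltW w'v) Xw'v.
move: yin; rewrite in_itv /= => /andP[w'y yv].
have y_gt0 : 0 < y := lt_trans w'_gt0 w'y.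
exists y; split => //.
- exact: ltW.
- rewrite lt_neqAle (le_trans yv vu) andbT.
  by apply: contra_notN nPy => /eqP->.
- apply: le_lt_trans (ext0_nd_le ndY (ltW y_gt0) yv) _.
  exact: lt_le_trans Yvw' (ext0_nd_le ndX (ltW w'_gt0) (ltW w'y)).
Qed.

End Descent.

Lemma alternating_sets_empty (R : realType) (Gl Gr : set R) :
  Gl `|` Gr `<=` [set x | 0 <= x] ->
  (forall x, Gl x -> exists2 y, Gr y & y < x) ->
  (forall y, Gr y -> exists2 x, Gl x & x < y) ->
  (forall t, 0 <= t ->
    (\forall u \near at_right t, ~ Gl u) \/ (\forall u \near at_right t, ~ Gr u)) ->
  Gl `|` Gr = set0.
Proof.
move=> G_ge0 GlGr GrGl sep; apply/seteqP; split => // x0 Gx0.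
have lbG : has_lbound (Gl `|` Gr) by exists 0.
pose tau := inf (Gl `|` Gr).
have tau0 : 0 <= tau by apply: lb_le_inf => //; exists x0.
have meets (Q : set R) : (\forall u \near at_right tau, Q u) ->
    (exists2 x, Gl x & Q x) /\ (exists2 y, Gr y & Q y).
  move=> [d /= d0 Qd].
  have Qin x : tau < x -> x < tau + d -> Q x.
    move=> tx xd; apply: Qd (tx); rewrite /ball_ /= ltr_distlC.
    by rewrite xd andbT (lt_trans _ tx) // gtrBl.
  have from_Gl x : Gl x -> x < tau + d ->
      (exists2 x, Gl x & Q x) /\ (exists2 y, Gr y & Q y).
    move=> Glx xd; have [y Gry yx] := GlGr x Glx; have [x' Glx' x'y] := GrGl y Gry.
    have ty : tau < y by apply: le_lt_trans x'y; apply: ge_inf => //; left.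
    split; [exists x | exists y] => //; apply: Qin => //.
    - exact: lt_trans ty yx.
    - exact: lt_trans yx xd.
  have [z Gz zd] := inf_adherent d0 (conj (ex_intro _ x0 Gx0) lbG).
  case: Gz => [Glz|Grz]; first exact: from_Gl Glz zd.
  by have [x Glx xz] := GrGl z Grz; exact: from_Gl Glx (lt_trans xz zd).
have [nearGl|nearGr] := sep tau tau0.
- by have [[x Glx /(_ Glx)]] := meets _ nearGl.
- by have [_ [y Gry /(_ Gry)]] := meets _ nearGr.
Qed.

Section ConstrainingProcesses.
Variables (R : realType) (l lt rt : R -> \bar R).
Variables (phi etal etar phit etalt etart : R -> R).
Hypotheses (lt_l : forall t, 0 <= t -> lt t = l t)
  (l_lt_rt : forall t, 0 <= t -> (l t < rt t)%E)
  (l_rc : forall t, 0 <= t -> l @ at_right t --> l t)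
  (rt_rc : forall t, 0 <= t -> rt @ at_right t --> rt t)
  (phit_rc : forall t, 0 <= t -> phit @ at_right t --> phit t)
  (phi_between : forall t, 0 <= t -> (l t <= (phi t)%:E <= rt t)%E)
  (phit_sub_phi : forall t, 0 <= t ->
     phit t - phi t = (etar t - etart t) - (etal t - etalt t)).
Hypotheses (ndl : nondecreasing (ext0 etal)) (ndr : nondecreasing (ext0 etar))
  (ndlt : nondecreasing (ext0 etalt)) (rclt : right_continuous (ext0 etalt))
  (ndrt : nondecreasing (ext0 etart)) (rcrt : right_continuous (ext0 etart)).
Hypotheses
  (etalt_off : (\int[LS ndlt rclt]_(s in [set x : R | (0 <= x)%R])
       (\1_[set s | (lt s < (phit s)%:E)%E] s)%:E = 0)%E)
  (etart_off : (\int[LS ndrt rcrt]_(s in [set x : R | (0 <= x)%R])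
       (\1_[set s | ((phit s)%:E < rt s)%E] s)%:E = 0)%E).

Let bad_low x :=
  [/\ 0 <= x, etar x < etart x, etal x < etalt x & ((phit x)%:E <= l x)%E].
Let bad_up x :=
  [/\ 0 <= x, etar x < etart x, etal x < etalt x & (rt x <= (phit x)%:E)%E].

Lemma lower_contact_le x : 0 <= x -> ((phit x)%:E <= l x)%E ->
  etar x - etart x <= etal x - etalt x.
Proof.
move=> x0 phit_l; have /andP[l_phi _] := phi_between x0.
have : phit x <= phi x by rewrite -lee_fin (le_trans phit_l l_phi).
by have := phit_sub_phi x0; lra.
Qed.

Lemma upper_contact_le x : 0 <= x -> (rt x <= (phit x)%:E)%E ->
  etal x - etalt x <= etar x - etart x.
Proof.
move=> x0 rt_phit; have /andP[_ phi_rt] := phi_between x0.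
have : phi x <= phit x by rewrite -lee_fin (le_trans phi_rt rt_phit).
by have := phit_sub_phi x0; lra.
Qed.

Lemma bad_up_le x : 0 <= x -> etar x < etart x -> exists2 y, bad_up y & y <= x.
Proof.
move=> x0 rx.
have to_up y : 0 <= y -> etar y < etart y -> (rt y <= (phit y)%:E)%E -> bad_up y.
  by move=> y0 ry upy; split => //; have := upper_contact_le y0 upy; lra.
have [below|] := pselect ((phit x)%:E < rt x)%E; last first.
  by move=> /negP; rewrite -leNgt => upx; exists x => //; exact: to_up.
have [y [y0 yx ry /negP]] := descent_off_support etart_off ndr x0 rx below.
by rewrite -leNgt => upy; exists y; [exact: to_up | exact: ltW].
Qed.

Lemma bad_low_le x : 0 <= x -> etal x < etalt x -> exists2 y, bad_low y & y <= x.
Proof.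
move=> x0 lx.
have to_low y : 0 <= y -> etal y < etalt y -> ((phit y)%:E <= l y)%E -> bad_low y.
  by move=> y0 ly lowy; split => //; have := lower_contact_le y0 lowy; lra.
have [above|] := pselect (lt x < (phit x)%:E)%E; last first.
  by move=> /negP; rewrite -leNgt lt_l // => lowx; exists x => //; exact: to_low.
have [y [y0 yx ly /negP]] := descent_off_support etalt_off ndl x0 lx above.
by rewrite -leNgt lt_l // => lowy; exists y; [exact: to_low | exact: ltW].
Qed.

Lemma bad_low_up_disjoint x : bad_low x -> ~ bad_up x.
Proof.
move=> [x0 _ _ low] [_ _ _ up].
by have := lt_le_trans (l_lt_rt x0) up; rewrite ltNge low.
Qed.

Lemma bad_near_right t : 0 <= t ->
  (\forall u \near at_right t, ~ bad_low u) \/ (\forall u \near at_right t, ~ bad_up u).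
Proof.
move=> t0; have phit_rcE : (fun u => (phit u)%:E) @ at_right t --> (phit t)%:E.
  by apply: cvg_EFin; [exact: nearW | exact: phit_rc].
have [l_phit|phit_l] := ltP (l t) (phit t)%:E.
- left; apply: filterS (cvge_lt_near (l_rc t0) phit_rcE l_phit).
  by move=> u lu [_ _ _]; rewrite leNgt lu.
- right; apply: filterS (cvge_lt_near phit_rcE (rt_rc t0) (le_lt_trans phit_l (l_lt_rt t0))).
  by move=> u ur [_ _ _]; rewrite leNgt ur.
Qed.

Lemma constraining_le t : 0 <= t -> etart t <= etar t /\ etalt t <= etal t.
Proof.
move=> t0.
have no_bad : bad_low `|` bad_up = set0.
  apply: alternating_sets_empty; last exact: bad_near_right.
  - by move=> x [[]|[]].
  - move=> x lowx; have [x0 rx _ _] := lowx.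
    have [y upy yx] := bad_up_le x0 rx.
    exists y => //; rewrite lt_neqAle yx andbT.
    by apply: contra_notN (bad_low_up_disjoint lowx) => /eqP<-.
  - move=> y upy; have [y0 _ ly _] := upy.
    have [x lowx xy] := bad_low_le y0 ly.
    exists x => //; rewrite lt_neqAle xy andbT.
    by apply: contra_notN (bad_low_up_disjoint lowx) => /eqP->.
rewrite !leNgt; split; apply/negP => lt_t.
- have [y upy _] := bad_up_le t0 lt_t.
  have : (bad_low `|` bad_up) y by right.
  by rewrite no_bad.
- have [y lowy _] := bad_low_le t0 lt_t.
  have : (bad_low `|` bad_up) y by left.
  by rewrite no_bad.
Qed.

End ConstrainingProcesses.

Theorem lemma3p1 (R : realType) (l lt : R -> \bar R) (r rt : R -> \bar R)
  (psi : R -> R)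
  (phi eta etal etar phit etat etalt etart : R -> R) :
  Dminus l -> Dminus lt -> Dplus r -> Dplus rt ->
  (forall t, 0 <= t -> lt t = l t) ->
  (forall t, 0 <= t -> (r t <= rt t)%E) ->
  (0 < ereal_inf [set (r t - l t)%E | t in [set t : R | (0 <= t)%R]])%E ->
  cadlag psi ->
  SP l r psi phi eta etal etar ->
  SP lt rt psi phit etat etalt etart ->
  forall t, 0 <= t -> etart t <= etar t /\ etalt t <= etal t.
Proof.
move=> [l_cadlag _] _ _ [rt_cadlag _] lt_l r_rt r_l_gap _
  [_ phi_eq phi_in eta_eq [ndl [_ [ndr [_ _]]]]]
  [[phit_cadlag _] phit_eq _ etat_eq [ndlt [rclt [ndrt [rcrt [etalt_off etart_off]]]]]].
apply: (constraining_le (phi := phi) lt_l _ _ _ _ _ _ ndl ndr etalt_off etart_off) => t t0.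
- have : (0 < r t - l t)%E.
    by apply: lt_le_trans r_l_gap _; apply: ereal_inf_lbound; exists t.
  by rewrite sube_gt0 => /lt_le_trans; apply; exact: r_rt.
- exact: (l_cadlag t t0).1.
- exact: (rt_cadlag t t0).1.
- exact: (phit_cadlag t t0).1.
- have /andP[l_phi phi_r] := phi_in t t0.
  by apply/andP; split => //; exact: le_trans phi_r (r_rt t t0).
- rewrite phit_eq // phi_eq // etat_eq // eta_eq //; lra.
Qed.
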